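(* Let $N\ge1$, $d\ge1$, and $\mathbf{q}=(q_1,\dots,q_N)\in(\mathbb{R}^d)^N$ with $q_i\ne q_j$ for $i\ne j$. Then for all $\gamma\in(0,1]$ and $s\ge0$, $$\sum_{i=1}^N\Big\langle\sum_{j\ne i}\frac{q_i-q_j}{|q_i-q_j|^\gamma},\sum_{k\ne i}\frac{q_i-q_k}{|q_i-q_k|^{s+1}}\Big\rangle\ge 2\sum_{1\le i<j\le N}\frac{1}{|q_i-q_j|^{s+\gamma-1}}.$$ *)

From mathcomp Require Import all_boot all_order all_algebra.
From mathcomp Require Import reals exp.
Import Order.TTheory GRing.Theory Num.Theory.
Local Open Scope ring_scope.

Definition dotv {R : realType} {d : nat} (u v : 'rV[R]_d) : R :=
  \sum_(k < d) u 0 k * v 0 k.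

Definition enorm {R : realType} {d : nat} (u : 'rV[R]_d) : R :=
  Num.sqrt (dotv u u).

(* The diagonal terms j = k give the right-hand side,
   since |x|^-gamma |x|^-(s+1) |x|^2 = |x|^-(s+gamma-1).  A term indexed by a
   triple (i, j, k) of distinct points is paired with (k, j, i): the pair has the
   common factor |q_i - q_k|^-(s+1), and by the law of cosines what remains is
   half of A(a)(a^2 + b^2 - c^2) + A(c)(c^2 + b^2 - a^2), where a = |q_i - q_j|,
   b = |q_i - q_k|, c = |q_k - q_j| and A(u) = u^-gamma.  This is nonnegative for
   every triangle as soon as u A(u) = u^(1-gamma) is nondecreasing, which is the
   only use of gamma <= 1. *)

From mathcomp Require Import all_boot all_order all_algebra.
From mathcomp Require Import reals exp.
From mathcomp Require Import ring lra.
Import Order.TTheory GRing.Theory Num.Theory.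
Local Open Scope ring_scope.

Section EuclideanSpace.
Context {R : realType} {d : nat}.
Implicit Types (u v w : 'rV[R]_d).

Lemma dotvC u v : dotv u v = dotv v u.
Proof. by apply: eq_bigr => k _; rewrite mulrC. Qed.

Lemma dotv0l w : dotv 0 w = 0.
Proof. by rewrite /dotv big1 // => k _; rewrite mxE mul0r. Qed.

Lemma dotvDl u v w : dotv (u + v) w = dotv u w + dotv v w.
Proof. by rewrite /dotv -big_split; apply: eq_bigr => k _; rewrite mxE mulrDl. Qed.

Lemma dotvZl (a : R) u w : dotv (a *: u) w = a * dotv u w.
Proof. by rewrite /dotv mulr_sumr; apply: eq_bigr => k _; rewrite mxE mulrA. Qed.

Lemma dotvNl u w : dotv (- u) w = - dotv u w.
Proof. by rewrite -scaleN1r dotvZl mulN1r. Qed.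

Lemma dotv_suml (I : Type) (r : seq I) (P : pred I) (F : I -> 'rV[R]_d) w :
  dotv (\sum_(i <- r | P i) F i) w = \sum_(i <- r | P i) dotv (F i) w.
Proof. exact: (big_morph (dotv^~ w) (fun u v => dotvDl u v w) (dotv0l w)). Qed.

Lemma dotvDr u v w : dotv w (u + v) = dotv w u + dotv w v.
Proof. by rewrite dotvC dotvDl !(dotvC w). Qed.

Lemma dotvZr (a : R) u w : dotv w (a *: u) = a * dotv w u.
Proof. by rewrite dotvC dotvZl dotvC. Qed.

Lemma dotvNr u w : dotv w (- u) = - dotv w u.
Proof. by rewrite dotvC dotvNl dotvC. Qed.

Lemma dotv_sumr (I : Type) (r : seq I) (P : pred I) (F : I -> 'rV[R]_d) w :
  dotv w (\sum_(i <- r | P i) F i) = \sum_(i <- r | P i) dotv w (F i).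
Proof. by rewrite dotvC dotv_suml; apply: eq_bigr => i _; rewrite dotvC. Qed.

Lemma dotvv_ge0 u : 0 <= dotv u u.
Proof. by apply: sumr_ge0 => k _; rewrite -expr2 sqr_ge0. Qed.

Lemma dotvv_eq0 u : (dotv u u == 0) = (u == 0).
Proof.
apply/idP/eqP => [|->]; last by rewrite dotv0l.
move/eqP/psumr_eq0P => uu0; apply/matrixP => i k; rewrite ord1 mxE.
by apply/eqP; rewrite -sqrf_eq0 expr2 uu0 // => j _; rewrite -expr2 sqr_ge0.
Qed.

Lemma enorm_ge0 u : 0 <= enorm u.
Proof. exact: sqrtr_ge0. Qed.

Lemma sqr_enorm u : enorm u ^+ 2 = dotv u u.
Proof. by rewrite sqr_sqrtr ?dotvv_ge0. Qed.

Lemma enorm_eq0 u : (enorm u == 0) = (u == 0).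
Proof. by rewrite sqrtr_eq0 le_eqVlt ltNge dotvv_ge0 orbF dotvv_eq0. Qed.

Lemma enorm_gt0 u : (0 < enorm u) = (u != 0).
Proof. by rewrite lt_def enorm_eq0 enorm_ge0 andbT. Qed.

Lemma enormN u : enorm (- u) = enorm u.
Proof. by rewrite /enorm dotvNl dotvNr opprK. Qed.

Lemma enormB u v : enorm (u - v) = enorm (v - u).
Proof. by rewrite -opprB enormN. Qed.

Lemma dotv_le_enorm u v : dotv u v <= enorm u * enorm v.
Proof.
have [->|u0] := eqVneq u 0; first by rewrite dotv0l mulr_ge0 ?enorm_ge0.
have [->|v0] := eqVneq v 0; first by rewrite dotvC dotv0l mulr_ge0 ?enorm_ge0.
have nu0 : 0 < enorm u by rewrite enorm_gt0.
have nv0 : 0 < enorm v by rewrite enorm_gt0.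
have := dotvv_ge0 (enorm v *: u - enorm u *: v).
rewrite !(dotvDl, dotvDr, dotvNl, dotvNr, dotvZl, dotvZr) (dotvC v u) -!sqr_enorm.
move=> h; have : 0 <= (enorm u * enorm v) * (2 * (enorm u * enorm v - dotv u v)) by lra.
by rewrite pmulr_rge0 ?mulr_gt0 // pmulr_rge0 // subr_ge0.
Qed.

Lemma enormD_le u v : enorm (u + v) <= enorm u + enorm v.
Proof.
rewrite -(ler_pXn2r (_ : 0 < 2)%N) ?nnegrE ?addr_ge0 ?enorm_ge0 //.
rewrite sqr_enorm dotvDl !dotvDr (dotvC v u) -!sqr_enorm.
have := dotv_le_enorm u v; lra.
Qed.

Lemma enorm_triangle u v w : enorm (u - w) <= enorm (u - v) + enorm (v - w).
Proof. by rewrite -[u - w](subrKA v) enormD_le. Qed.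

Lemma dotv_polarization u v w :
  2 * dotv (u - v) (u - w) = enorm (u - v) ^+ 2 + enorm (u - w) ^+ 2 - enorm (v - w) ^+ 2.
Proof.
have -> : v - w = (u - w) - (u - v) by rewrite opprB [RHS]addrC addrA subrK.
move: (u - v) (u - w) => a b; rewrite !sqr_enorm.
rewrite !(dotvDl, dotvDr, dotvNl, dotvNr) (dotvC b a); ring.
Qed.
End EuclideanSpace.

Lemma ler_mul_invpowR (R : realType) (g u v : R) :
  g <= 1 -> 0 < u -> u <= v -> u * (u `^ g)^-1 <= v * (v `^ g)^-1.
Proof.
move=> g1 u0 uv; have v0 := lt_le_trans u0 uv.
have mul_invpowR r : 0 < r -> r * (r `^ g)^-1 = r `^ (1 - g).
  by move=> r0; rewrite -powRN powRD ?powRr1 ?ltW // lt0r_neq0 ?implybT.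
rewrite !mul_invpowR //.
by apply: ge0_ler_powR; rewrite ?subr_ge0 ?nnegrE ?(ltW u0) ?(ltW v0).
Qed.

Lemma invpowR_mul_sqr (R : realType) (g s r : R) : 0 < r ->
  (r `^ g)^-1 * (r `^ (s + 1))^-1 * r ^+ 2 = (r `^ (s + g - 1))^-1.
Proof.
move=> r0; rewrite -!powRN -(powR_mulrn 2 (ltW r0)) -!powRD ?lt0r_neq0 ?implybT //.
by congr (_ `^ _); ring.
Qed.

Lemma sumr_swap_pairs_ge0 (R : numDomainType) (I : finType) (G : I -> I -> R) :
  (forall i k, 0 <= G i k + G k i) -> 0 <= \sum_i \sum_k G i k.
Proof.
move=> G_ge0; have : 0 <= \sum_i \sum_k (G i k + G k i).
  by apply: sumr_ge0 => i _; apply: sumr_ge0.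
under eq_bigr do rewrite big_split /=.
by rewrite big_split /= [X in _ + X]exchange_big /= -mulr2n pmulrn_lge0.
Qed.

Lemma sum_neq_square_split (V : nmodType) (I : finType) (F : I -> I -> V) (i : I) :
  \sum_(j | j != i) \sum_(k | k != i) F j k =
  \sum_(j | j != i) F j j
  + \sum_j \sum_k (if [&& j != i, k != i & k != j] then F j k else 0).
Proof.
under eq_bigr => j ji do rewrite (bigD1 j ji) /=.
rewrite big_split /= [X in _ + X = _ + _]big_mkcond /=; congr (_ + _).
apply: eq_bigr => j _; case: (j != i) => /=; last by rewrite big1.
by rewrite big_mkcond.
Qed.

Lemma sum_neq_sym (V : nmodType) (n : nat) (f : 'I_n -> 'I_n -> V) :
  (forall i j, f i j = f j i) ->
  \sum_(i < n) \sum_(j < n | j != i) f i j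
  = (\sum_(i < n) \sum_(j < n | (i < j)%N) f i j) *+ 2.
Proof.
move=> f_sym.
under eq_bigr => i _ do rewrite (bigID (fun j : 'I_n => (i < j)%N)) /=.
rewrite big_split mulr2n; congr (_ + _).
  apply: eq_bigr => i _; apply: eq_bigl => j.
  by rewrite andb_idl // => ij; apply: contraTneq ij => ->; rewrite ltnn.
transitivity (\sum_(i < n) \sum_(j < n) (if (j < i)%N then f i j else 0)).
  apply: eq_bigr => i _; rewrite big_mkcond; apply: eq_bigr => j _.
  by rewrite -leqNgt ltn_neqAle val_eqE.
rewrite exchange_big; apply: eq_bigr => j _; rewrite [RHS]big_mkcond.
by apply: eq_bigr => i _; rewrite f_sym.
Qed.

Section WeightedTriangle.
Context {R : realType}.
Variables A B : R -> R.
Hypothesis A_ge0 : forall {u}, 0 < u -> 0 <= A u.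
Hypothesis B_ge0 : forall {u}, 0 < u -> 0 <= B u.
Hypothesis mulA_nondecr : forall {u v}, 0 < u -> u <= v -> u * A u <= v * A v.

Lemma triangle_weighted_ge0_ordered (x y z : R) :
  0 < z -> z <= x -> x <= y + z -> 0 <= y ->
  0 <= A z * (y ^+ 2 + z ^+ 2 - x ^+ 2) + A x * (x ^+ 2 + y ^+ 2 - z ^+ 2).
Proof.
move=> z0 zx xyz y0; have x0 : 0 < x := lt_le_trans z0 zx.
have Ax0 := A_ge0 x0; have Az0 := A_ge0 z0.
have Px : 0 <= x ^+ 2 + y ^+ 2 - z ^+ 2 by nra.
have [Pz|Pz] := leP 0 (y ^+ 2 + z ^+ 2 - x ^+ 2); first by rewrite addr_ge0 ?mulr_ge0.
(* Obtuse angle at the vertex opposite x: multiply by x and compare through z * A z <= x * A x. *)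
have key : x * (x ^+ 2 - y ^+ 2 - z ^+ 2) <= z * (x ^+ 2 + y ^+ 2 - z ^+ 2).
  rewrite -subr_ge0.
  have -> : z * (x ^+ 2 + y ^+ 2 - z ^+ 2) - x * (x ^+ 2 - y ^+ 2 - z ^+ 2)
          = (y + z - x) * (x ^+ 2 - z ^+ 2 + x * y + y * z) by ring.
  by apply: mulr_ge0; nra.
suff : x * (A z * (x ^+ 2 - y ^+ 2 - z ^+ 2)) <= x * (A x * (x ^+ 2 + y ^+ 2 - z ^+ 2)).
  by rewrite ler_pM2l //; lra.
have := ler_wpM2l Az0 key; have := ler_wpM2r Px (mulA_nondecr z0 zx); lra.
Qed.

Lemma triangle_weighted_ge0 (a b c : R) :
  0 < a -> 0 < c -> a <= b + c -> c <= b + a ->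
  0 <= A a * (a ^+ 2 + b ^+ 2 - c ^+ 2) + A c * (c ^+ 2 + b ^+ 2 - a ^+ 2).
Proof.
wlog ca : a c / c <= a => [hw a0 c0 abc cba|a0 c0 abc cba].
  have [ca|/ltW ac] := leP c a; first exact: hw.
  by rewrite addrC; apply: hw.
have b0 : 0 <= b by lra.
have := @triangle_weighted_ge0_ordered a b c c0 ca abc b0; lra.
Qed.

Lemma vertex_pair_ge0 (d : nat) (a b c : 'rV[R]_d) : a != b -> c != b ->
  0 <= A (enorm (a - b)) * dotv (a - b) (a - c)
       + A (enorm (c - b)) * dotv (c - b) (c - a).
Proof.
move=> ab cb.
have abc : enorm (a - b) <= enorm (a - c) + enorm (c - b) := enorm_triangle a c b.
have cba : enorm (c - b) <= enorm (a - c) + enorm (a - b).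
  by rewrite (enormB a c); exact: enorm_triangle.
have := triangle_weighted_ge0 (enorm (a - b)) (enorm (a - c)) (enorm (c - b)).
rewrite !enorm_gt0 !subr_eq0 => /(_ ab cb abc cba).
have pa := dotv_polarization a b c; have pc := dotv_polarization c b a.
rewrite (enormB b c) in pa; rewrite (enormB c a) (enormB b a) in pc.
rewrite -pa -pc; lra.
Qed.

Lemma sum_distinct_triples_ge0 (d n : nat) (q : 'I_n -> 'rV[R]_d) : injective q ->
  0 <= \sum_i \sum_j \sum_k
         (if [&& j != i, k != i & k != j] then
            A (enorm (q i - q j)) * B (enorm (q i - q k)) * dotv (q i - q j) (q i - q k)
          else 0).
Proof.
move=> q_inj; rewrite exchange_big /=.
apply: sumr_ge0 => j _; apply: sumr_swap_pairs_ge0 => i k.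
have -> : [&& j != k, i != k & i != j] = [&& j != i, k != i & k != j].
  by rewrite (eq_sym j k) (eq_sym i k) (eq_sym i j); do 3!case: (_ != _).
case: ifP => [/and3P[ji ki kj]|_]; last by rewrite addr0.
rewrite (enormB (q k) (q i)) -!mulrA !(mulrCA (A _)) -mulrDr.
rewrite mulr_ge0 ?B_ge0 ?vertex_pair_ge0 ?enorm_gt0 ?subr_eq0 ?(inj_eq q_inj) //;
  by rewrite eq_sym.
Qed.

End WeightedTriangle.

Theorem lemmaA1 (R : realType) (N d : nat) (hN : (1 <= N)%N) (hd : (1 <= d)%N)
  (q : 'I_N -> 'rV[R]_d) (hq : injective q) (gamma s : R)
  (hg0 : 0 < gamma) (hg1 : gamma <= 1) (hs : 0 <= s) :
  \sum_(i < N)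
     dotv (\sum_(j < N | j != i) ((enorm (q i - q j)) `^ gamma)^-1 *: (q i - q j))
          (\sum_(k < N | k != i) ((enorm (q i - q k)) `^ (s + 1))^-1 *: (q i - q k))
  >= 2 * \sum_(i < N) \sum_(j < N | (i < j)%N)
          ((enorm (q i - q j)) `^ (s + gamma - 1))^-1.
Proof.
pose A (u : R) := (u `^ gamma)^-1; pose B (u : R) := (u `^ (s + 1))^-1.
pose T i j k := A (enorm (q i - q j)) * B (enorm (q i - q k)) * dotv (q i - q j) (q i - q k).
have -> : \sum_(i < N)
     dotv (\sum_(j < N | j != i) A (enorm (q i - q j)) *: (q i - q j))
          (\sum_(k < N | k != i) B (enorm (q i - q k)) *: (q i - q k))
   = \sum_i \sum_(j | j != i) \sum_(k | k != i) T i j k.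
  apply: eq_bigr => i _; rewrite dotv_suml; apply: eq_bigr => j _.
  rewrite dotvZl dotv_sumr mulr_sumr; apply: eq_bigr => k _.
  by rewrite dotvZr mulrA.
rewrite (eq_bigr _ (fun i _ => @sum_neq_square_split _ _ (T i) i)) big_split /=.
rewrite [X in _ <= X + _](eq_bigr (fun i => \sum_(j < N | j != i)
    (enorm (q i - q j) `^ (s + gamma - 1))^-1)); last first.
  move=> i _; apply: eq_bigr => j ji.
  by rewrite /T -sqr_enorm invpowR_mul_sqr // enorm_gt0 subr_eq0 eq_sym (inj_eq hq).
rewrite sum_neq_sym => [|i j]; last by rewrite enormB.
rewrite mulr_natl lerDl; apply: sum_distinct_triples_ge0 hq.
- by move=> u _; rewrite invr_ge0 powR_ge0.
- by move=> u _; rewrite invr_ge0 powR_ge0.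
- by move=> u v; exact: ler_mul_invpowR.
Qed.
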